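(* Let $M$ be a metrizable space. (1) If $M$ is a Krasinkiewicz space, then every open subset of $M$ is a Krasinkiewicz space. (2) If every compact subset of $M$ is contained in a subset of $M$ which is a Krasinkiewicz space, then $M$ is a Krasinkiewicz space.
   Context: For a compact metrizable $X$, a map $g\colon X\to M$ is a Krasinkiewicz map if every subcontinuum of $X$ is either contained in a fiber of $g$ or contains a component of some fiber of $g$. A metrizable space $M$ is a Krasinkiewicz space if for every compact metrizable $X$ the Krasinkiewicz maps are dense in $C(X,M)$ with the uniform convergence topology. *)

From Stdlib Require Import Reals Lra List.
From Stdlib Require Import ProofIrrelevance.
Open Scope R_scope.

(** A metrizable space is represented by a type equipped with a compatible metric. *)
Record MetricSpace : Type := MkMetricSpace {
  mcarrier :> Type;
  mdist : mcarrier -> mcarrier -> R;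
  mdist_eq0 : forall x y, mdist x y = 0 <-> x = y;
  mdist_sym : forall x y, mdist x y = mdist y x;
  mdist_tri : forall x y z, mdist x z <= mdist x y + mdist y z
}.

Arguments mdist {m} _ _.

Section Topology.
Variable X : MetricSpace.

Definition mset := X -> Prop.

Definition is_open (U : mset) : Prop :=
  forall x, U x -> exists eps, 0 < eps /\ forall y, mdist x y < eps -> U y.

Definition subset (A B : mset) : Prop := forall x, A x -> B x.

Definition is_compact (K : mset) : Prop :=
  forall (I : Type) (U : I -> mset),
    (forall i, is_open (U i)) ->
    subset K (fun x => exists i, U i x) ->
    exists l : list I, subset K (fun x => exists i, In i l /\ U i x).

Definition compact_space : Prop := is_compact (fun _ => True).

Definition is_connected (A : mset) : Prop :=
  forall U V : mset, is_open U -> is_open V ->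
    subset A (fun x => U x \/ V x) ->
    (forall x, A x -> U x -> V x -> False) ->
    subset A U \/ subset A V.

Definition is_continuum (A : mset) : Prop :=
  (exists x, A x) /\ is_compact A /\ is_connected A.

Definition is_component (C F : mset) : Prop :=
  (exists x, C x) /\ subset C F /\ is_connected C /\
  forall D : mset, is_connected D -> subset C D -> subset D F -> subset D C.

End Topology.

Arguments is_open {X} U.
Arguments subset {X} A B.
Arguments is_compact {X} K.
Arguments is_connected {X} A.
Arguments is_continuum {X} A.
Arguments is_component {X} C F.

Definition continuous {X Y : MetricSpace} (f : X -> Y) : Prop :=
  forall x eps, 0 < eps -> exists delta, 0 < delta /\
    forall y, mdist x y < delta -> mdist (f x) (f y) < eps.

Definition fiber {X M : MetricSpace} (g : X -> M) (y : M) : mset X :=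
  fun x => g x = y.

Definition krasinkiewicz_map {X M : MetricSpace} (g : X -> M) : Prop :=
  forall K : mset X, is_continuum K ->
    (exists y, subset K (fiber g y)) \/
    (exists y (C : mset X), is_component C (fiber g y) /\ subset C K).

(** Krasinkiewicz space: for every compact metrizable X, the Krasinkiewicz maps
    are dense in C(X,M) with the topology of uniform convergence. *)
Definition krasinkiewicz_space (M : MetricSpace) : Prop :=
  forall X : MetricSpace, compact_space X ->
    forall f : X -> M, continuous f ->
      forall eps, 0 < eps ->
        exists g : X -> M, continuous g /\ krasinkiewicz_map g /\
          forall x, mdist (f x) (g x) < eps.

Definition sub_dist (M : MetricSpace) (P : M -> Prop)
  (a b : {x : M | P x}) : R := mdist (proj1_sig a) (proj1_sig b).

Lemma sub_dist_eq0 (M : MetricSpace) (P : M -> Prop) :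
  forall a b, sub_dist M P a b = 0 <-> a = b.
Proof.
  intros [a Ha] [b Hb]; unfold sub_dist; simpl; split.
  - intros H. apply mdist_eq0 in H. subst b.
    rewrite (proof_irrelevance _ Ha Hb). reflexivity.
  - intros H. inversion H. apply mdist_eq0. reflexivity.
Qed.

Lemma sub_dist_sym (M : MetricSpace) (P : M -> Prop) :
  forall a b, sub_dist M P a b = sub_dist M P b a.
Proof. intros; apply mdist_sym. Qed.

Lemma sub_dist_tri (M : MetricSpace) (P : M -> Prop) :
  forall a b c, sub_dist M P a c <= sub_dist M P a b + sub_dist M P b c.
Proof. intros; apply mdist_tri. Qed.

Definition subspace (M : MetricSpace) (P : M -> Prop) : MetricSpace :=
  MkMetricSpace {x : M | P x} (sub_dist M P)
    (sub_dist_eq0 M P) (sub_dist_sym M P) (sub_dist_tri M P).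

(** Both parts of the proposition reduce to one observation: composing a map
    with an injection (here the inclusion of a subspace) does not change its
    fibers, hence it preserves and reflects being a Krasinkiewicz map.
    Continuity and uniform distance are likewise unchanged, since the
    subspace metric is the restricted one.

    (1) Given a map [f : X -> U] with [U] open, its image is compact, so some
        uniform neighbourhood of radius [d] of the image lies in [U].  Any
        Krasinkiewicz approximation in [M] closer than [min eps d] therefore
        takes values in [U] and can be read as a map into [U].
    (2) Given [f : X -> M], its compact image lies in a Krasinkiewicz subspace
        [S]; approximate [f] inside [S] and compose with the inclusion. *)

From Stdlib Require Import Reals Lra List ProofIrrelevance.
Open Scope R_scope.

Lemma subspace_val_inj (M : MetricSpace) (P : M -> Prop) (a b : {x : M | P x}) :
  proj1_sig a = proj1_sig b -> a = b.
Proof.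
  destruct a as [a Ha], b as [b Hb]; simpl; intros <-.
  f_equal; apply proof_irrelevance.
Qed.

Lemma is_component_ext (X : MetricSpace) (C F F' : mset X) :
  (forall x, F x <-> F' x) -> is_component C F -> is_component C F'.
Proof.
  intros E [Cne [CF [Cconn Cmax]]].
  repeat split; auto.
  - intros x Cx; apply E; auto.
  - intros D Dconn CD DF'; apply Cmax; auto.
    intros x Dx; apply E; auto.
Qed.

Section InjectiveComposition.
Variables (X M N : MetricSpace) (h : M -> N) (g : X -> M).
Hypothesis h_inj : forall a b, h a = h b -> a = b.

Lemma fiber_compose_inj (y : M) (x : X) :
  fiber (fun x => h (g x)) (h y) x <-> fiber g y x.
Proof.
  unfold fiber; split; [apply h_inj | intros ->; reflexivity].
Qed.

Lemma krasinkiewicz_map_compose_inj :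
  krasinkiewicz_map g -> krasinkiewicz_map (fun x => h (g x)).
Proof.
  intros Hg K HK.
  destruct (Hg K HK) as [[y Ky] | [y [C [HC CK]]]].
  - left; exists (h y); intros x Kx.
    apply fiber_compose_inj, Ky, Kx.
  - right; exists (h y), C; split; [| exact CK].
    apply (is_component_ext X C (fiber g y)); [| exact HC].
    intro x; symmetry; apply fiber_compose_inj.
Qed.

(** ... and reflects them: a component of a fiber of [h o g] is nonempty, so
    the fiber lies over a point [h (g x0)] of the image of [h]. *)
Lemma krasinkiewicz_map_of_compose_inj :
  krasinkiewicz_map (fun x => h (g x)) -> krasinkiewicz_map g.
Proof.
  intros Hhg K HK.
  destruct (Hhg K HK) as [[z Kz] | [z [C [HC CK]]]].
  - destruct HK as [[x0 Kx0] _].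
    left; exists (g x0); intros x Kx.
    apply h_inj; unfold fiber in Kz; rewrite (Kz x Kx), (Kz x0 Kx0); reflexivity.
  - destruct HC as [[x0 Cx0] HCrest].
    assert (Hz : z = h (g x0)) by (symmetry; exact (proj1 HCrest x0 Cx0)).
    subst z.
    right; exists (g x0), C; split; [| exact CK].
    apply (is_component_ext X C (fiber (fun x => h (g x)) (h (g x0)))).
    + intro x; apply fiber_compose_inj.
    + exact (conj (ex_intro _ x0 Cx0) HCrest).
Qed.

End InjectiveComposition.

Lemma image_compact (X M : MetricSpace) (f : X -> M) :
  compact_space X -> continuous f -> is_compact (fun y => exists x, y = f x).
Proof.
  intros HX Hf I U HU Hcov.
  destruct (HX I (fun i x => U i (f x))) as [l Hl].
  - intros i x Ux.
    destruct (HU i (f x) Ux) as [e [He Hball]].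
    destruct (Hf x e He) as [d [Hd Hcont]].
    exists d; split; auto.
  - intros x _; apply Hcov; exists x; reflexivity.
  - exists l; intros y [x ->]; apply Hl; exact Logic.I.
Qed.

Lemma list_min_pos (A : Type) (r : A -> R) (l : list A) :
  (forall a, In a l -> 0 < r a) ->
  exists d, 0 < d /\ forall a, In a l -> d <= r a.
Proof.
  induction l as [| a l IH]; intros Hpos.
  - exists 1; split; [lra | intros _ []].
  - destruct IH as [d [Hd Hle]]; [intros b Hb; apply Hpos; right; exact Hb |].
    exists (Rmin (r a) d); split.
    + apply Rmin_glb_lt; [apply Hpos; left |]; auto.
    + intros b [<- | Hb]; [apply Rmin_l |].
      eapply Rle_trans; [apply Rmin_r | auto].
Qed.

(** Cover [X] by
    the sets where [f] stays within half of a radius admissible at some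
    [f c], extract a finite subcover and take the least half-radius. *)
Lemma uniform_neighbourhood (X M : MetricSpace) (U : mset M) (f : X -> M) :
  compact_space X -> continuous f -> is_open U -> (forall x, U (f x)) ->
  exists d, 0 < d /\ forall x y, mdist (f x) y < d -> U y.
Proof.
  intros HX Hf HU fU.
  (* admissible centres and radii: balls around [f c] of radius [s] inside U *)
  set (I := {p : X * R | 0 < snd p /\ forall y, mdist (f (fst p)) y < snd p -> U y}).
  set (centre (i : I) := fst (proj1_sig i)).
  set (radius (i : I) := snd (proj1_sig i)).
  set (V := fun (i : I) (x : X) => mdist (f (centre i)) (f x) < radius i / 2).
  destruct (HX I V) as [l Hl].
  - intros [[c s] [Hs Hball]] x Vx; unfold V, centre, radius in *; simpl in *.
    set (r := s / 2 - mdist (f c) (f x)).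
    destruct (Hf x r ltac:(unfold r; lra)) as [d [Hd Hcont]].
    exists d; split; auto; intros y Hy.
    pose proof (Hcont y Hy); pose proof (mdist_tri M (f c) (f x) (f y)).
    unfold r in *; lra.
  - intros x _.
    destruct (HU (f x) (fU x)) as [e [He Hball]].
    exists (exist _ (x, e) (conj He Hball)); unfold V, centre, radius; simpl.
    rewrite (proj2 (mdist_eq0 M (f x) (f x)) eq_refl); lra.
  - destruct (list_min_pos I (fun i => radius i / 2) l) as [d [Hd Hle]].
    { intros i _; destruct (proj2_sig i) as [Hs _]; unfold radius; lra. }
    exists d; split; auto; intros x y Hxy.
    destruct (Hl x Logic.I) as [i [Hi Vx]].
    pose proof (Hle i Hi) as Hdi.
    destruct i as [[c s] [Hs Hball]]; unfold V, centre, radius in *; simpl in *.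
    apply Hball.
    pose proof (mdist_tri M (f c) (f x) y); lra.
Qed.

Lemma krasinkiewicz_open_subspace (M : MetricSpace) (U : mset M) :
  krasinkiewicz_space M -> is_open U -> krasinkiewicz_space (subspace M U).
Proof.
  intros HM HU X HX f Hf eps Heps.
  (* [f] read as a map into [M] is the same continuous map *)
  set (f0 := fun x => proj1_sig (f x) : M).
  destruct (uniform_neighbourhood X M U f0 HX Hf HU (fun x => proj2_sig (f x)))
    as [d [Hd Hnbhd]].
  destruct (HM X HX f0 Hf (Rmin eps d) (Rmin_glb_lt _ _ _ Heps Hd))
    as [g [Hg [Hkras Hclose]]].
  assert (gU : forall x, U (g x)).
  { intro x; apply (Hnbhd x).
    eapply Rlt_le_trans; [apply Hclose | apply Rmin_r]. }
  exists (fun x => exist U (g x) (gU x)); split; [| split].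
  - exact Hg.
  - apply (krasinkiewicz_map_of_compose_inj X (subspace M U) M (@proj1_sig _ _)).
    + apply subspace_val_inj.
    + exact Hkras.
  - intro x; eapply Rlt_le_trans; [apply Hclose | apply Rmin_l].
Qed.

Lemma krasinkiewicz_of_compact_cover (M : MetricSpace) :
  (forall K : mset M, is_compact K ->
     exists S : mset M, subset K S /\ krasinkiewicz_space (subspace M S)) ->
  krasinkiewicz_space M.
Proof.
  intros Hcover X HX f Hf eps Heps.
  destruct (Hcover _ (image_compact X M f HX Hf)) as [S [imS HS]].
  (* [f] corestricted to [S] is the same continuous map *)
  set (fS := fun x => exist S (f x) (imS (f x) (ex_intro _ x eq_refl))
               : subspace M S).
  destruct (HS X HX fS Hf eps Heps) as [g [Hg [Hkras Hclose]]].
  exists (fun x => proj1_sig (g x)); split; [| split].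
  - exact Hg.
  - apply krasinkiewicz_map_compose_inj; [apply subspace_val_inj | exact Hkras].
  - exact Hclose.
Qed.

Theorem proposition3p1 (M : MetricSpace) :
  (krasinkiewicz_space M ->
     forall U : mset M, is_open U -> krasinkiewicz_space (subspace M U))
  /\
  ((forall K : mset M, is_compact K ->
      exists S : mset M, subset K S /\ krasinkiewicz_space (subspace M S)) ->
   krasinkiewicz_space M).
Proof.
  split.
  - intros HM U HU; exact (krasinkiewicz_open_subspace M U HM HU).
  - apply krasinkiewicz_of_compact_cover.
Qed.
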